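(* Let $p$ be one of $(123,\emptyset,\{0\})$, $(123,\{0\},\{2\})$, $(132,\emptyset,\{0\})$, $(132,\{0\},\{2\})$, or any pattern in the same symmetry class as one of these. Then for all $n\ge1$, \[a_n(p)=\sum_{k=0}^{n-1}\frac{(n-1)!}{k!}.\]
   Context: For $n\ge1$, $\mathcal S_n$ is the set of permutations $\pi=\pi_1\cdots\pi_n$ of $[n]$. A bi-vincular pattern of length $k$ is a triple $p=(\sigma,X,Y)$ with $\sigma\in\mathcal S_k$ and $X,Y\subseteq\{0,1,\dots,k\}$. A permutation $\pi\in\mathcal S_n$ contains $p$ if there are indices $1\le i_1<\dots<i_k\le n$ such that $(\pi_{i_1},\dots,\pi_{i_k})$ is order-isomorphic to $\sigma$ and, letting $j_1<\dots<j_k$ be the values $\pi_{i_1},\dots,\pi_{i_k}$ sorted increasingly and setting $i_0=j_0=0$, $i_{k+1}=j_{k+1}=n+1$, one has $i_{x+1}=i_x+1$ for all $x\in X$ and $j_{y+1}=j_y+1$ for all $y\in Y$. Otherwise $\pi$ avoids $p$; $a_n(p)$ is the number of $\pi\in\mathcal S_n$ avoiding $p$. Symmetries: $p^{i}=(\sigma^{-1},Y,X)$, $p^{r}=(\sigma^{r},\{k-x:x\in X\},Y)$, $p^{c}=(\sigma^{c},X,\{k-y:y\in Y\})$ with $\sigma^r_j=\sigma_{k+1-j}$, $\sigma^c_j=k+1-\sigma_j$; the symmetry class of $p$ consists of all patterns obtained from $p$ by finitely many applications of these maps. *)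

From mathcomp Require Import all_boot all_fingroup.
Set Implicit Arguments. Unset Strict Implicit. Unset Printing Implicit Defensive.

(* Conventions: a permutation of [n] is an element of 'S_n acting on
   'I_n = {0,..,n-1}; the 0-based value v stands for the 1-based value v+1.
   Positions are likewise 0-based internally; the boundary conventions
   i_0 = j_0 = 0, i_{k+1} = j_{k+1} = n+1 are in 1-based numbering. *)

Record bvpat := BVPat {
  bk : nat;
  bsig : 'S_bk;
  bX : {set 'I_bk.+1};
  bY : {set 'I_bk.+1} }.

Section Containment.
Variables (n : nat) (pi : 'S_n) (p : bvpat).
Local Notation k := (bk p).
Local Notation sigma := (bsig p).

(* 1-based i_x for x in {0..k+1}, given the occurrence positions f. *)
Definition occ_pos (f : 'I_k -> 'I_n) (x : nat) : nat :=
  if x == 0 then 0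
  else if k < x then n.+1
  else (oapp (fun o : 'I_k => val (f o)) 0 (insub x.-1)).+1.

(* 1-based j_x for x in {0..k+1}: the x-th smallest value of the occurrence,
   which is the value at the pattern entry of rank x, i.e. sigma^-1 (x). *)
Definition occ_val (f : 'I_k -> 'I_n) (x : nat) : nat :=
  if x == 0 then 0
  else if k < x then n.+1
  else (oapp (fun o : 'I_k => val (pi (f ((sigma^-1)%g o)))) 0 (insub x.-1)).+1.

Definition occurrence (f : 'I_k -> 'I_n) : bool :=
  [&& [forall a : 'I_k, forall b : 'I_k, (a < b) ==> (f a < f b)],
      [forall a : 'I_k, forall b : 'I_k,
          (pi (f a) < pi (f b)) == (sigma a < sigma b)],
      [forall x in bX p, occ_pos f (val x).+1 == (occ_pos f (val x)).+1] &
      [forall y in bY p, occ_val f (val y).+1 == (occ_val f (val y)).+1]].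

Definition contains : bool := [exists f : {ffun 'I_k -> 'I_n}, occurrence f].

End Containment.

Definition avoids n (pi : 'S_n) (p : bvpat) : bool := ~~ contains pi p.

Definition a_n (p : bvpat) (n : nat) : nat := #|[set pi : 'S_n | avoids pi p]|.

Definition srev k (s : 'S_k) : 'S_k :=
  perm (inj_comp (@perm_inj _ s) (@rev_ord_inj k)).
Definition scompl k (s : 'S_k) : 'S_k :=
  perm (inj_comp (@rev_ord_inj k) (@perm_inj _ s)).

Definition pat_i (p : bvpat) : bvpat :=
  @BVPat (bk p) ((bsig p)^-1)%g (bY p) (bX p).
Definition pat_r (p : bvpat) : bvpat :=
  @BVPat (bk p) (srev (bsig p)) [set rev_ord x | x in bX p] (bY p).
Definition pat_c (p : bvpat) : bvpat :=
  @BVPat (bk p) (scompl (bsig p)) (bX p) [set rev_ord y | y in bY p].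

Inductive sym_class (p : bvpat) : bvpat -> Prop :=
  | sym_refl : sym_class p p
  | sym_i q : sym_class p q -> sym_class p (pat_i q)
  | sym_r q : sym_class p q -> sym_class p (pat_r q)
  | sym_c q : sym_class p q -> sym_class p (pat_c q).

(* the permutations 123 and 132 in 'S_3 (0-based: 012 and 021) *)
Definition perm123 : 'S_3 := 1%g.
Definition perm132 : 'S_3 := tperm (@Ordinal 3 1 isT) (@Ordinal 3 2 isT).

Definition o0 : 'I_4 := @Ordinal 4 0 isT.
Definition o2 : 'I_4 := @Ordinal 4 2 isT.

Definition p123_e_0 : bvpat := @BVPat 3 perm123 set0 [set o0].
Definition p123_0_2 : bvpat := @BVPat 3 perm123 [set o0] [set o2].
Definition p132_e_0 : bvpat := @BVPat 3 perm132 set0 [set o0].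
Definition p132_0_2 : bvpat := @BVPat 3 perm132 [set o0] [set o2].

From mathcomp Require Import all_boot all_fingroup zify.
Set Implicit Arguments. Unset Strict Implicit. Unset Printing Implicit Defensive.

(* The symmetries i, r, c are induced by the bijections inverse, reverse and
   complement of S_n, which carry occurrences of a pattern to occurrences of
   its image; so a_n is constant on symmetry classes, and since the inverse
   exchanges (s, {0}, {2}) and (s, {2}, {0}) for the involutions s = 123, 132,
   only the patterns (s, X, {0}) with X a subset of {2} remain.  Such a
   pattern occurs in pi exactly when the entries to the right of the entry 1
   are not monotone (decreasing for 123, increasing for 132), and then some
   pair of adjacent entries is already out of order.  Removing the first entry
   of pi gives a_(n+1) = 1 + n a_n: the rest must be monotone if pi starts
   with 1, and is otherwise unconstrained by the first entry. *)

(* [framed g] is the sequence 0, g 0 + 1, ..., g (k-1) + 1, n + 1; both the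
   i_x and the j_x of an occurrence are of this form (see [occurrenceP]). *)
Definition framed n k (g : 'I_k -> 'I_n) (x : nat) : nat :=
  if x == 0 then 0
  else if k < x then n.+1
  else (oapp (fun o : 'I_k => val (g o)) 0 (insub x.-1)).+1.

Section Framed.
Variables (n k : nat).
Implicit Types g h : 'I_k -> 'I_n.

Lemma framed_gt g x : k < x -> framed g x = n.+1.
Proof. by move=> lt_kx; rewrite /framed lt_kx; case: x lt_kx. Qed.

Lemma framedS g (o : 'I_k) : framed g o.+1 = (g o).+1.
Proof.
rewrite /framed /= ltnNge ltn_ord /= insubT //= => lt_ok.
by congr (val (g _)).+1; apply: val_inj.
Qed.

Lemma framed_le g x : framed g x <= n.+1.
Proof.
rewrite /framed; case: eqP => // _; case: ltnP => // _.
by case: insub => [o|] //=; rewrite ltnS ltnW.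
Qed.

Lemma framed_cases x : [\/ x = 0, k < x | exists o : 'I_k, x = o.+1].
Proof.
case: x => [|x]; first by constructor 1.
by case: (ltnP x k) => [lt_xk|]; [constructor 3; exists (Ordinal lt_xk)|constructor 2].
Qed.

Lemma eq_framed g h : g =1 h -> framed g =1 framed h.
Proof.
move=> eq_gh x; case: (framed_cases x) => [->|lt_kx|[o ->]] //.
  by rewrite !framed_gt.
by rewrite !framedS eq_gh.
Qed.

Lemma framed_rev g x : x <= k.+1 ->
  framed (fun o => rev_ord (g (rev_ord o))) x = n.+1 - framed g (k.+1 - x).
Proof.
move=> le_x; case: (framed_cases x) => [->|lt_kx|[o ->]].
- by rewrite subn0 (framed_gt g) ?subnn.
- have -> : x = k.+1 by apply/eqP; rewrite eqn_leq le_x lt_kx.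
  by rewrite framed_gt // subnn subn0.
- have -> : k.+1 - o.+1 = (rev_ord o).+1 by rewrite /=; have := ltn_ord o; lia.
  by rewrite !framedS /=; case: (g (rev_ord o)) => y lt_y /=; lia.
Qed.

Lemma framed_rev_adj g (x : 'I_k.+1) :
  framed g x.+1 = (framed g x).+1 ->
  framed (fun o => rev_ord (g (rev_ord o))) (rev_ord x).+1 =
  (framed (fun o => rev_ord (g (rev_ord o))) (rev_ord x)).+1.
Proof.
move=> adj; have le_xk : x <= k by rewrite -ltnS.
rewrite /= !framed_rev; try lia.
have -> : k.+1 - (k - x).+1 = x by lia.
have -> : k.+1 - (k - x) = x.+1 by lia.
by have := framed_le g x.+1; rewrite adj; lia.
Qed.

End Framed.

Lemma occurrenceP n (pi : 'S_n) p (f : 'I_(bk p) -> 'I_n) :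
  reflect [/\ forall a b : 'I_(bk p), a < b -> f a < f b,
              forall a b : 'I_(bk p), (pi (f a) < pi (f b)) = (bsig p a < bsig p b),
              forall x : 'I_(bk p).+1, x \in bX p -> framed f x.+1 = (framed f x).+1 &
              forall y : 'I_(bk p).+1, y \in bY p ->
                let g o := pi (f ((bsig p)^-1 o)%g) in
                framed g y.+1 = (framed g y).+1]
   (occurrence pi f).
Proof.
apply: (iffP and4P) => [[/forallP inc /forallP iso /forall_inP adjX /forall_inP adjY]
                       |[inc iso adjX adjY]]; split.
- by move=> a b; move/forallP: (inc a) => /(_ b) /implyP.
- by move=> a b; move/forallP: (iso a) => /(_ b) /eqP.
- by move=> x /adjX /eqP.
- by move=> y /adjY /eqP.
- by apply/forallP => a; apply/forallP => b; apply/implyP; apply: inc.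
- by apply/forallP => a; apply/forallP => b; apply/eqP; apply: iso.
- by apply/forall_inP => x /adjX /eqP.
- by apply/forall_inP => y /adjY /eqP.
Qed.

Lemma incr_ord_mono m k (f : 'I_k -> 'I_m) :
  (forall a b : 'I_k, a < b -> f a < f b) -> forall a b : 'I_k, (f a < f b) = (a < b).
Proof.
move=> inc a b; apply/idP/idP; last exact: inc.
case: (ltngtP a b) => // [/inc lt_fba|/val_inj ->]; last by rewrite ltnn.
by rewrite ltnNge ltnW.
Qed.

Lemma incr_ord_inj m k (f : 'I_k -> 'I_m) :
  (forall a b : 'I_k, a < b -> f a < f b) -> injective f.
Proof.
move=> inc a b eq_f; apply: val_inj.
by case: (ltngtP a b) => // /inc; rewrite eq_f ltnn.
Qed.

Lemma srevE k (s : 'S_k) x : srev s x = s (rev_ord x). Proof. by rewrite permE. Qed.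
Lemma scomplE k (s : 'S_k) x : scompl s x = rev_ord (s x). Proof. by rewrite permE. Qed.

Lemma srevK k : involutive (@srev k).
Proof. by move=> s; apply/permP => x; rewrite !srevE rev_ordK. Qed.
Lemma scomplK k : involutive (@scompl k).
Proof. by move=> s; apply/permP => x; rewrite !scomplE rev_ordK. Qed.

Lemma srevV k (s : 'S_k) x : (srev s)^-1%g x = rev_ord (s^-1%g x).
Proof. by apply: (@perm_inj _ (srev s)); rewrite permKV srevE rev_ordK permKV. Qed.
Lemma scomplV k (s : 'S_k) x : (scompl s)^-1%g x = s^-1%g (rev_ord x).
Proof. by apply: (@perm_inj _ (scompl s)); rewrite permKV scomplE permKV rev_ordK. Qed.

Lemma ltn_rev_ord m (x y : 'I_m) : (rev_ord x < rev_ord y) = (y < x).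
Proof. by have := ltn_ord x; have := ltn_ord y; rewrite /= => *; apply/idP/idP; lia. Qed.

Lemma imset_rev_ordK k (X : {set 'I_k}) :
  [set rev_ord x | x in [set rev_ord x | x in X]] = X.
Proof. by rewrite -imset_comp (eq_imset _ (@rev_ordK k)) imset_id. Qed.

Lemma pat_iK : involutive pat_i.
Proof. by case=> k s X Y; rewrite /pat_i /= invgK. Qed.
Lemma pat_rK : involutive pat_r.
Proof. by case=> k s X Y; rewrite /pat_r /= srevK imset_rev_ordK. Qed.
Lemma pat_cK : involutive pat_c.
Proof. by case=> k s X Y; rewrite /pat_c /= scomplK imset_rev_ordK. Qed.

Section Symmetries.
Variables (n : nat) (p : bvpat) (pi : 'S_n).
Local Notation s := (bsig p).

Lemma contains_pat_i : contains pi p -> contains pi^-1%g (pat_i p).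
Proof.
case/existsP=> f /occurrenceP [inc iso adjX adjY].
set g := [ffun o => pi (f (s^-1%g o))].
apply/existsP; exists g; apply/(@occurrenceP _ _ (pat_i p)); split => /=.
- by move=> a b lt_ab; rewrite !ffunE iso !permKV.
- by move=> a b; rewrite !ffunE !permK incr_ord_mono.
- have eq_g : g =1 fun o => pi (f (s^-1%g o)) by move=> o; rewrite ffunE.
  by move=> x /adjY; rewrite !(eq_framed eq_g).
- have eq_g : (fun o => pi^-1%g (g ((s^-1)^-1%g o))) =1 f.
    by move=> o; rewrite ffunE invgK !permK.
  by move=> y /adjX; rewrite !(eq_framed eq_g).
Qed.

Lemma contains_pat_r : contains pi p -> contains (srev pi) (pat_r p).
Proof.
case/existsP=> f /occurrenceP [inc iso adjX adjY].
set g := [ffun o => rev_ord (f (rev_ord o))].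
apply/existsP; exists g; apply/(@occurrenceP _ _ (pat_r p)); split => /=.
- by move=> a b lt_ab; rewrite !ffunE ltn_rev_ord inc // ltn_rev_ord.
- by move=> a b; rewrite !ffunE !srevE !rev_ordK iso.
- have eq_g : g =1 fun o => rev_ord (f (rev_ord o)) by move=> o; rewrite ffunE.
  by move=> _ /imsetP [x /adjX adj ->]; rewrite !(eq_framed eq_g); exact: (framed_rev_adj adj).
- have eq_g : (fun o => srev pi (g ((srev s)^-1%g o))) =1 fun o => pi (f (s^-1%g o)).
    by move=> o; rewrite ffunE srevV srevE !rev_ordK.
  by move=> y /adjY; rewrite !(eq_framed eq_g).
Qed.

Lemma contains_pat_c : contains pi p -> contains (scompl pi) (pat_c p).
Proof.
case/existsP=> f /occurrenceP [inc iso adjX adjY].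
apply/existsP; exists f; apply/(@occurrenceP _ _ (pat_c p)); split => //=.
- by move=> a b; rewrite !scomplE ltn_rev_ord iso ltn_rev_ord.
- have eq_g : (fun o => scompl pi (f ((scompl s)^-1%g o))) =1
              fun o => rev_ord (pi (f (s^-1%g (rev_ord o)))).
    by move=> o; rewrite scomplV scomplE.
  by move=> _ /imsetP [y /adjY adj ->]; rewrite !(eq_framed eq_g); exact: (framed_rev_adj adj).
Qed.

End Symmetries.

Lemma a_n_invariant (g : bvpat -> bvpat) n (phi : 'S_n -> 'S_n) :
  involutive phi -> involutive g ->
  (forall p (pi : 'S_n), contains pi p -> contains (phi pi) (g p)) ->
  forall p, a_n (g p) n = a_n p n.
Proof.
move=> phiK gK contains_g p.
have contains_gE pi : contains (phi pi) (g p) = contains pi p.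
  by apply/idP/idP => [/contains_g|/contains_g//]; rewrite phiK gK.
rewrite /a_n -(card_preimset _ (inv_inj phiK)); apply: eq_card => pi.
by rewrite !inE /avoids contains_gE.
Qed.

Lemma a_n_sym_class p q n : sym_class p q -> a_n q n = a_n p n.
Proof.
elim=> // r _ <-.
- exact: a_n_invariant invgK pat_iK (@contains_pat_i n) r.
- exact: a_n_invariant (@srevK n) pat_rK (@contains_pat_r n) r.
- exact: a_n_invariant (@scomplK n) pat_cK (@contains_pat_c n) r.
Qed.

Definition lt_dir (b : bool) (x y : nat) : bool := if b then x < y else y < x.

Lemma lt_dir_trans b : transitive (lt_dir b).
Proof. by case: b => y x z /= lt1 lt2; [exact: ltn_trans lt1 lt2 | exact: ltn_trans lt2 lt1]. Qed.

Lemma lt_dir_bump b h x y : lt_dir b (bump h x) (bump h y) = lt_dir b x y.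
Proof. by rewrite /bump; case: b; case: (leqP h x); case: (leqP h y) => /= *; apply/idP/idP; lia. Qed.

Definition monotone n b (s : 'S_n) : bool :=
  [forall i : 'I_n, forall j : 'I_n, (i < j) ==> lt_dir b (s i) (s j)].

Definition monotone_after_min n b (s : 'S_n) : bool :=
  [forall a : 'I_n, forall i : 'I_n, forall j : 'I_n,
     [&& val (s a) == 0, a < i & i < j] ==> lt_dir b (s i) (s j)].

Lemma incr_ord_ge m k (f : 'I_k -> 'I_m) :
  (forall a b : 'I_k, a < b -> f a < f b) -> forall i : 'I_k, i <= f i.
Proof.
move=> inc [i lt_ik]; elim: i lt_ik => // i IH lt_ik.
have lt_i : i < k := ltnW lt_ik.
by have := IH lt_i; have := inc (Ordinal lt_i) (Ordinal lt_ik) (ltnSn i); rewrite /=; lia.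
Qed.

Lemma incr_perm_eq1 n (s : 'S_n) : (forall i j : 'I_n, i < j -> s i < s j) -> s = 1%g.
Proof.
move=> inc; have incV (i j : 'I_n) : i < j -> s^-1%g i < s^-1%g j.
  by move=> lt_ij; rewrite -(incr_ord_mono inc) !permKV.
apply/permP => i; apply/val_inj/eqP; rewrite perm1 /= eqn_leq incr_ord_ge // andbT.
by have := incr_ord_ge incV (s i); rewrite permK.
Qed.

Lemma card_monotone n b : #|[set s : 'S_n | monotone b s]| = 1.
Proof.
rewrite -(cards1 (if b then 1 else scompl 1 : 'S_n)%g); apply: eq_card => s.
rewrite !inE; apply/forallP/eqP => [mono | ->] => [|i].
- have {}mono (i j : 'I_n) : i < j -> lt_dir b (s i) (s j).
    by move: (mono i) => /forallP /(_ j) /implyP.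
  case: b mono => /= mono; first exact: incr_perm_eq1.
  rewrite -{1}[s]scomplK; congr scompl; apply: incr_perm_eq1 => i j lt_ij.
  by rewrite !scomplE ltn_rev_ord mono.
- apply/forallP => j; apply/implyP; case: b => /=; first by rewrite !perm1.
  by rewrite !scomplE !perm1 ltn_rev_ord.
Qed.

Section FirstEntry.
Variables (n : nat) (b : bool).
Implicit Types (s : 'S_n) (j : 'I_n.+1).

Lemma lift_permS j s k : val (lift_perm ord0 j s (lift ord0 k)) = bump j (s k).
Proof. by rewrite lift_perm_lift. Qed.

Lemma monotone_after_min_lift j s : j != ord0 ->
  monotone_after_min b (lift_perm ord0 j s) = monotone_after_min b s.
Proof.
rewrite -lt0n => j_gt0; apply/forallP/forallP => mono a.
- apply/forallP => i; apply/forallP => k; apply/implyP => /and3P [/eqP sa0 lt_ai lt_ik].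
  move: (mono (lift ord0 a)) => /forallP /(_ (lift ord0 i)) /forallP /(_ (lift ord0 k)).
  rewrite !lift_permS lt_dir_bump /bump sa0 !lift0 !ltnS lt_ai lt_ik leqNgt j_gt0.
  by move/implyP; apply.
- apply/forallP => i; apply/forallP => k; apply/implyP => /and3P [sa0 lt_ai lt_ik].
  case: (unliftP ord0 a) sa0 lt_ai => [a' ->|->] sa0 lt_ai; last first.
    by move: sa0; rewrite lift_perm_id => /eqP j0; rewrite j0 in j_gt0.
  case: (unliftP ord0 i) lt_ai lt_ik => [i' ->|->] // lt_ai lt_ik.
  case: (unliftP ord0 k) lt_ik => [k' ->|->] // lt_ik.
  rewrite !lift_permS lt_dir_bump.
  move: (mono a') => /forallP /(_ i') /forallP /(_ k') /implyP; apply.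
  rewrite lift_permS /bump in sa0; rewrite !lift0 !ltnS in lt_ai lt_ik.
  by rewrite lt_ai lt_ik andbT; move: sa0; case: leqP => /= _; lia.
Qed.

Lemma monotone_after_min_lift0 s :
  monotone_after_min b (lift_perm ord0 ord0 s) = monotone b s.
Proof.
apply/forallP/forallP => [mono i|mono a].
- apply/forallP => k; apply/implyP => lt_ik.
  move: (mono ord0) => /forallP /(_ (lift ord0 i)) /forallP /(_ (lift ord0 k)) /implyP.
  by rewrite !lift_permS lt_dir_bump lift_perm_id !lift0 !ltnS lt_ik; apply.
- apply/forallP => i; apply/forallP => k; apply/implyP => /and3P [sa0 lt_ai lt_ik].
  case: (unliftP ord0 a) sa0 lt_ai => [a' ->|->] sa0 lt_ai; first by rewrite lift_permS in sa0.
  case: (unliftP ord0 i) lt_ai lt_ik => [i' ->|->] // _ lt_ik.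
  case: (unliftP ord0 k) lt_ik => [k' ->|->] // lt_ik.
  rewrite !lift_permS lt_dir_bump; rewrite !lift0 !ltnS in lt_ik.
  by move: (mono i') => /forallP /(_ k') /implyP; apply.
Qed.

End FirstEntry.

Lemma lift_perm0_bij n :
  bijective (fun js : 'I_n.+1 * 'S_n => lift_perm ord0 js.1 js.2).
Proof.
apply: inj_card_bij; last by rewrite card_prod card_ord !card_Sn factS.
move=> [j s] [j' s'] /= eq_lift.
have eq_j : j = j' by rewrite -(lift_perm_id ord0 j s) eq_lift lift_perm_id.
subst j'.
congr (_, _); apply/permP => k; apply: (@lift_inj _ j).
by rewrite -(lift_perm_lift ord0 j s) -(lift_perm_lift ord0 j s') eq_lift.
Qed.

Lemma card_monotone_after_minS n b :
  #|[set s : 'S_n.+1 | monotone_after_min b s]| =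
  1 + n * #|[set s : 'S_n | monotone_after_min b s]|.
Proof.
set F := fun js : 'I_n.+1 * 'S_n => lift_perm ord0 js.1 js.2.
rewrite -(on_card_preimset (onW_bij _ (lift_perm0_bij n))) -/F.
rewrite -(cardsID [set js : 'I_n.+1 * 'S_n | js.1 == ord0]).
have -> : F @^-1: [set s | monotone_after_min b s] :&: [set js | js.1 == ord0]
          = setX [set ord0] [set s | monotone b s].
  apply/setP => [[j s]]; rewrite !inE /F /=.
  by case: eqP => [->|_]; rewrite ?andbT ?andbF ?monotone_after_min_lift0.
have -> : F @^-1: [set s | monotone_after_min b s] :\: [set js | js.1 == ord0]
          = setX [set~ ord0] [set s | monotone_after_min b s].
  apply/setP => [[j s]]; rewrite !inE /F /=.
  by case: eqP => [->|/eqP j_neq0]; rewrite ?andbF //= monotone_after_min_lift.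
by rewrite !cardsX cards1 card_monotone cardsC1 card_ord.
Qed.

Lemma fact_dvdn_fact k n : k <= n -> k`! %| n`!.
Proof. by move=> le_kn; rewrite -(ffact_fact (leq_subr k n)) subKn // dvdn_mull. Qed.

Lemma card_monotone_after_min n b :
  #|[set s : 'S_n.+1 | monotone_after_min b s]| = \sum_(k < n.+1) n`! %/ k`!.
Proof.
elim: n => [|n IH]; first by rewrite card_monotone_after_minS big_ord1.
rewrite card_monotone_after_minS IH [in RHS]big_ord_recr /= divnn fact_gt0 addnC.
rewrite big_distrr /=; congr (_ + _); apply: eq_bigr => k _.
by rewrite muln_divA ?fact_dvdn_fact // -ltnS.
Qed.

Definition q0 : 'I_3 := @Ordinal 3 0 isT.
Definition q1 : 'I_3 := @Ordinal 3 1 isT.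
Definition q2 : 'I_3 := @Ordinal 3 2 isT.

Lemma ord3P (x : 'I_3) : [\/ x = q0, x = q1 | x = q2].
Proof.
by case: x => [[|[|[|//]]] lt_x3]; [constructor 1|constructor 2|constructor 3]; apply: val_inj.
Qed.

Definition sig3 (b : bool) : 'S_3 := if b then perm132 else perm123.

Lemma sig3_0 b : sig3 b q0 = q0.
Proof. by case: b; rewrite /sig3 /perm123 /perm132 ?perm1 ?tpermD. Qed.
Lemma sig3_1 b : sig3 b q1 = if b then q2 else q1.
Proof. by case: b; rewrite /sig3 /perm123 /perm132 ?perm1 ?tpermL. Qed.
Lemma sig3_2 b : sig3 b q2 = if b then q1 else q2.
Proof. by case: b; rewrite /sig3 /perm123 /perm132 ?perm1 ?tpermR. Qed.
Lemma sig3V b : (sig3 b)^-1%g = sig3 b.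
Proof. by case: b; rewrite /sig3 /perm123 /perm132 ?invg1 ?tpermV. Qed.

Lemma sig3_iso b (u : 'I_3 -> nat) :
  injective u -> u q0 = 0 -> ~~ lt_dir b (u q1) (u q2) ->
  forall x y, (u x < u y) = (sig3 b x < sig3 b y).
Proof.
move=> u_inj u0 not_lt.
have u_neq x y : x != y -> u x != u y by apply: contra => /eqP /u_inj ->.
have := u_neq q0 q1 isT; have := u_neq q0 q2 isT; have := u_neq q1 q2 isT.
rewrite u0 => ne12 ne02 ne01.
move=> x y; case: (ord3P x) => ->; case: (ord3P y) => ->;
  rewrite ?sig3_0 ?sig3_1 ?sig3_2 ?ltnn //;
  case: b not_lt => /= not_lt; rewrite ?u0 /=; apply/idP/idP; lia.
Qed.

Definition pat3 b (X : {set 'I_4}) : bvpat := @BVPat 3 (sig3 b) X [set o0].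

Lemma pat3_inv b : pat_i (pat3 b [set o2]) = @BVPat 3 (sig3 b) [set o0] [set o2].
Proof. by rewrite /pat_i /= sig3V. Qed.

Section Pat3.
Variables (n : nat) (pi : 'S_n) (b : bool).

Lemma contains_pat3_min X : contains pi (pat3 b X) -> ~~ monotone_after_min b pi.
Proof.
case/existsP=> f /occurrenceP [inc iso _ /(_ o0 (set11 o0))].
rewrite /= (framedS _ q0) sig3V sig3_0 /= => -[pi_f0].
apply/negP => /forallP /(_ (f q0)) /forallP /(_ (f q1)) /forallP /(_ (f q2)) /implyP.
rewrite !inc //= !andbT => /(_ (introT eqP pi_f0)).
have iso12 : (pi (f q1) < pi (f q2)) = (sig3 b q1 < sig3 b q2) := iso q1 q2.
rewrite sig3_1 sig3_2 in iso12.
by case: b iso12 => /= iso12; rewrite ?iso12 // ltnNge ltnW ?iso12.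
Qed.

Lemma lt_dir_chain (a : 'I_n) :
  (forall i k : 'I_n, a < i -> val k = i.+1 -> lt_dir b (pi i) (pi k)) ->
  forall i j : 'I_n, a < i -> i < j -> lt_dir b (pi i) (pi j).
Proof.
move=> step i j lt_ai; case: j => j lt_jn /=.
elim: j lt_jn => // j IH lt_jn; rewrite ltnS leq_eqVlt => /orP [/eqP eq_ij|lt_ij].
  by apply: step => //=; lia.
apply: (lt_dir_trans (IH (ltnW lt_jn) lt_ij)); apply: step => //=.
exact: ltn_trans lt_ai lt_ij.
Qed.

Lemma monotone_after_min_adjacent : monotone_after_min b pi =
  [forall a : 'I_n, forall i : 'I_n, forall k : 'I_n,
     [&& val (pi a) == 0, a < i & val k == i.+1] ==> lt_dir b (pi i) (pi k)].
Proof.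
apply/forallP/forallP => mono a; apply/forallP => i; apply/forallP => k;
  apply/implyP => /and3P [pi_a0 lt_ai lt_ik].
- by move: (mono a) => /forallP /(_ i) /forallP /(_ k) /implyP; apply;
     rewrite pi_a0 lt_ai (eqP lt_ik) /=.
- apply: (lt_dir_chain (a := a)) => // i' k' lt_ai' k'_i'.
  by move: (mono a) => /forallP /(_ i') /forallP /(_ k') /implyP; apply;
     rewrite pi_a0 lt_ai' k'_i' eqxx.
Qed.

Lemma contains_pat3 (X : {set 'I_4}) :
  X \subset [set o2] -> contains pi (pat3 b X) = ~~ monotone_after_min b pi.
Proof.
move=> sub_X; apply/idP/idP; first exact: contains_pat3_min.
rewrite monotone_after_min_adjacent => /forallPn [a /forallPn [i /forallPn [k]]].
rewrite negb_imply => /andP [/and3P [/eqP pi_a0 lt_ai /eqP k_i] not_lt].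
set f := [ffun x : 'I_3 => nth a [:: a; i; k] x].
have [f0 f1 f2] : [/\ f q0 = a, f q1 = i & f q2 = k] by rewrite !ffunE.
have inc (x y : 'I_3) : x < y -> f x < f y.
  by case: (ord3P x) => ->; case: (ord3P y) => ->; rewrite ?f0 ?f1 ?f2 //= k_i => _;
     rewrite ?ltnSn // (ltn_trans lt_ai).
apply/existsP; exists f; apply/(@occurrenceP _ _ (pat3 b X)); split.
- exact: inc.
- apply: (sig3_iso (u := fun x => val (pi (f x)))).
  + by move=> x y /val_inj/perm_inj/(incr_ord_inj inc).
  + by rewrite f0.
  + by rewrite f1 f2.
- move=> x /(subsetP sub_X) /set1P ->.
  by rewrite (framedS _ q2) (framedS _ q1) f1 f2 k_i.
- by move=> y /set1P ->; rewrite /= (framedS _ q0) sig3V sig3_0 f0 pi_a0.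
Qed.

End Pat3.

Lemma a_n_pat3 b (X : {set 'I_4}) n :
  X \subset [set o2] -> a_n (pat3 b X) n.+1 = \sum_(k < n.+1) n`! %/ k`!.
Proof.
move=> sub_X; rewrite /a_n -(card_monotone_after_min n b); apply: eq_card => s.
by rewrite !inE /avoids contains_pat3 // negbK.
Qed.

Theorem mainTheorem9 (p : bvpat) :
  (sym_class p123_e_0 p \/ sym_class p123_0_2 p \/
   sym_class p132_e_0 p \/ sym_class p132_0_2 p) ->
  forall n : nat, 0 < n ->
    a_n p n = \sum_(k < n) (n.-1)`! %/ k`!.
Proof.
have sym_pat3 b : sym_class (pat3 b [set o2]) (@BVPat 3 (sig3 b) [set o0] [set o2]).
  by rewrite -pat3_inv; apply/sym_i/sym_refl.
move=> cls [//|n] _ /=.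
case: cls => [|[|[|]]] /a_n_sym_class ->.
- exact: (a_n_pat3 false n (sub0set _)).
- by rewrite (a_n_sym_class _ (sym_pat3 false)) a_n_pat3.
- exact: (a_n_pat3 true n (sub0set _)).
- by rewrite (a_n_sym_class _ (sym_pat3 true)) a_n_pat3.
Qed.
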